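(* Let $M=(Q,\Sigma,\Delta,Q_\alpha,F)$ be a simple NFA and let $M_\circlearrowleft=(Q,\Sigma,\Delta_\circlearrowleft,Q_\alpha,F)$, where $\Delta_\circlearrowleft(q,\sigma)=\{q\}\cup\Delta(q,\sigma)$ if $q\in Q_\alpha$ and $\Delta_\circlearrowleft(q,\sigma)=\Delta(q,\sigma)$ otherwise. Then $M_\circlearrowleft$ is simple if and only if there do not exist $\sigma\in\Sigma$, $q_\alpha\in Q_\alpha$ and $q\in Q$ with $q\neq q_\alpha$ such that $q_\alpha\in\Delta(q,\sigma)$.
   Context: An NFA is a tuple $M=(Q,\Sigma,\Delta,Q_\alpha,F)$ where $Q$ is a finite set of states, $\Sigma$ a finite alphabet, $\Delta:Q\times\Sigma\to\mathcal{P}(Q)$ the transition function, $Q_\alpha\subseteq Q$ the set of start states and $F\subseteq Q$ the set of accepting states. $\Delta$ is extended to strings by $\hat\Delta(q,\varepsilon)=\{q\}$ and $\hat\Delta(q,\sigma s)=\bigcup_{p\in\Delta(q,\sigma)}\hat\Delta(p,s)$. The language of a state $q$ is $\mathcal{L}(q)=\{s\in\Sigma^*:\hat\Delta(q,s)\cap F\neq\emptyset\}$ (computed with respect to the transition function of the automaton under consideration). A state $q$ is accessible if $q\in\hat\Delta(q_\alpha,s)$ for some $q_\alpha\in Q_\alpha$, $s\in\Sigma^*$. An NFA is called simple if all its states are accessible and the languages $\mathcal{L}(q)$, $q\in Q$, are non-empty and pairwise disjoint. *)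

From mathcomp Require Import all_boot.
Set Implicit Arguments. Unset Strict Implicit. Unset Printing Implicit Defensive.

Record nfa (Q Sigma : finType) := NFA {
  delta : Q -> Sigma -> {set Q};
  starts : {set Q};
  finals : {set Q}
}.

Fixpoint hat_delta (Q Sigma : finType) (d : Q -> Sigma -> {set Q})
    (q : Q) (w : seq Sigma) : {set Q} :=
  match w with
  | [::] => [set q]
  | s :: w' => \bigcup_(p in d q s) hat_delta d p w'
  end.

Definition lang (Q Sigma : finType) (M : nfa Q Sigma) (q : Q) (w : seq Sigma) : Prop :=
  hat_delta (delta M) q w :&: finals M != set0.

Definition accessible (Q Sigma : finType) (M : nfa Q Sigma) (q : Q) : Prop :=
  exists qa, exists w : seq Sigma, qa \in starts M /\ q \in hat_delta (delta M) qa w.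

Definition simple (Q Sigma : finType) (M : nfa Q Sigma) : Prop :=
  (forall q, accessible M q) /\
  (forall q, exists w, lang M q w) /\
  (forall q1 q2, q1 <> q2 -> forall w, ~ (lang M q1 w /\ lang M q2 w)).

Definition loop_delta (Q Sigma : finType) (M : nfa Q Sigma) : Q -> Sigma -> {set Q} :=
  fun q s => if q \in starts M then q |: delta M q s else delta M q s.

Definition nfa_loop (Q Sigma : finType) (M : nfa Q Sigma) : nfa Q Sigma :=
  NFA (loop_delta M) (starts M) (finals M).

From mathcomp Require Import all_boot.
Set Implicit Arguments. Unset Strict Implicit. Unset Printing Implicit Defensive.

(* If q_a in Delta(q, sigma) with q <> q_a, then q and the looping start state
   q_a both read sigma and land in q_a, so sigma L(q_a) is shared by two
   states of M_loop. Conversely, if no edge enters a start state from another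
   state, a run of M_loop leaving a start state never comes back to one, so it
   idles at its initial state for some prefix and is then a run of M. Two
   accepting runs from q1 and q2 on the same word thus become runs of M on two
   suffixes; the shorter suffix is reached from q1 along a path ending in a
   state whose language meets L(q2), which by simplicity of M is q2 itself.
   Either that path is empty, or q2 idled and is a start state entered from q1;
   both force q1 = q2. *)

Definition entry_free (Q Sigma : finType) (S : {set Q})
    (d : Q -> Sigma -> {set Q}) : Prop :=
  forall q s qa, qa \in S -> qa \in d q s -> q = qa.

Section HatDelta.
Variables (Q Sigma : finType).
Implicit Types (d : Q -> Sigma -> {set Q}) (q : Q) (u v w : seq Sigma).

Lemma hat_delta_catP d q u v x :
  reflect (exists2 p, p \in hat_delta d q u & x \in hat_delta d p v)
          (x \in hat_delta d q (u ++ v)).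
Proof.
apply: (iffP idP).
- elim: u q => [|s u IH] q /=; first by exists q; rewrite ?in_set1.
  case/bigcupP=> p Hp /IH [r Hr Hx]; exists r => //.
  by apply/bigcupP; exists p.
- elim: u q => [|s u IH] q [r] /=; first by move=> /set1P ->.
  case/bigcupP=> p Hp Hr Hx; apply/bigcupP; exists p => //.
  by apply: IH; exists r.
Qed.

Lemma hat_delta_sub d d' :
  (forall q s, d q s \subset d' q s) ->
  forall w q, hat_delta d q w \subset hat_delta d' q w.
Proof.
move=> sub_dd'; elim=> [|s w IH] q //=.
apply/subsetP=> x /bigcupP [p Hp Hx]; apply/bigcupP; exists p.
- exact: subsetP (sub_dd' q s) _ Hp.
- exact: subsetP (IH p) _ Hx.
Qed.

Lemma entry_free_hat_delta S d w q qa :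
  entry_free S d -> qa \in S -> qa \in hat_delta d q w -> q = qa.
Proof.
move=> freeS HqaS; elim: w q => [|s w IH] q /=; first by move/set1P ->.
by case/bigcupP=> p Hp /IH Epqa; apply: (freeS q s qa HqaS); rewrite -Epqa.
Qed.

End HatDelta.

Section Languages.
Variables (Q Sigma : finType) (M : nfa Q Sigma).
Implicit Types (q : Q) (u v w : seq Sigma).

Lemma langP q w :
  reflect (exists2 f, f \in hat_delta (delta M) q w & f \in finals M)
          (hat_delta (delta M) q w :&: finals M != set0).
Proof.
apply: (iffP (set0Pn _)) => [[f /setIP []] | [f Hf HF]]; first by exists f.
by exists f; apply/setIP.
Qed.

Lemma lang_cons q s w :
  lang M q (s :: w) <-> exists2 p, p \in delta M q s & lang M p w.
Proof.
split=> [/langP [f /bigcupP [p Hp Hf] HF] | [p Hp /langP [f Hf HF]]].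
- by exists p => //; apply/langP; exists f.
- by apply/langP; exists f => //; apply/bigcupP; exists p.
Qed.

Lemma lang_cat q u v :
  lang M q (u ++ v) -> exists2 p, p \in hat_delta (delta M) q u & lang M p v.
Proof.
case/langP=> f /hat_delta_catP [p Hp Hf] HF.
by exists p => //; apply/langP; exists f.
Qed.

End Languages.

Section Loop.
Variables (Q Sigma : finType) (M : nfa Q Sigma).
Implicit Types (q : Q) (w : seq Sigma).

Lemma loop_delta_sub q s : delta M q s \subset loop_delta M q s.
Proof. by rewrite /loop_delta; case: ifP => // _; apply: subsetUr. Qed.

Lemma loop_delta_start q s : q \in starts M -> q \in loop_delta M q s.
Proof. by rewrite /loop_delta => ->; apply: setU11. Qed.

Lemma accessible_loop q : accessible M q -> accessible (nfa_loop M) q.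
Proof.
case=> qa [w [Hqa Hq]]; exists qa, w; split=> //.
exact: subsetP (hat_delta_sub loop_delta_sub w qa) _ Hq.
Qed.

Lemma lang_loop q w : lang M q w -> lang (nfa_loop M) q w.
Proof.
case/langP=> f Hf HF; apply/langP; exists f => //.
exact: subsetP (hat_delta_sub loop_delta_sub w q) _ Hf.
Qed.

Lemma hat_loop_drop q w x :
  entry_free (starts M) (delta M) ->
  x \in hat_delta (loop_delta M) q w ->
  exists2 k, (k == 0) || (q \in starts M) & x \in hat_delta (delta M) q (drop k w).
Proof.
move=> free; elim: w q => [|s w IH] q /=; first by exists 0.
case/bigcupP=> p Hp /IH [k Hk Hx].
have [/andP [/eqP Epq Hq] | not_loop] := boolP ((p == q) && (q \in starts M)).
  by exists k.+1; rewrite ?Hq ?orbT // -Epq.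
have Hd : p \in delta M q s.
  move: Hp; rewrite /loop_delta; case: ifP => // Hq /setU1P [Epq|//].
  by rewrite Epq eqxx Hq in not_loop.
have Ek : k = 0.
  case/orP: Hk => [/eqP //|Hp_start].
  by rewrite (free _ _ _ Hp_start Hd) eqxx Hp_start in not_loop.
by rewrite Ek drop0 in Hx; exists 0 => //=; apply/bigcupP; exists p.
Qed.

Lemma lang_loop_drop q w :
  entry_free (starts M) (delta M) -> lang (nfa_loop M) q w ->
  exists2 k, (k == 0) || (q \in starts M) & lang M q (drop k w).
Proof.
move=> free /langP [f /(hat_loop_drop free) [k Hk Hf] HF].
by exists k => //; apply/langP; exists f.
Qed.

Lemma simple_loop_entry_free :
  simple (nfa_loop M) -> entry_free (starts M) (delta M).
Proof.
case=> _ [nonempty disjoint] q s qa Hqa Hd.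
have [// | /eqP neq] := eqVneq q qa; exfalso.
have [w Hw] := nonempty qa.
apply: (disjoint q qa neq (s :: w)).
by split; apply/lang_cons; exists qa => //;
  [apply: subsetP (loop_delta_sub q s) _ Hd | apply: loop_delta_start].
Qed.

Lemma loop_lang_disjoint q1 q2 w :
  (forall q1 q2, q1 <> q2 -> forall w, ~ (lang M q1 w /\ lang M q2 w)) ->
  entry_free (starts M) (delta M) ->
  lang (nfa_loop M) q1 w -> lang (nfa_loop M) q2 w -> q1 = q2.
Proof.
move=> disjoint free /(lang_loop_drop free) [k1 Hk1 L1].
move=> /(lang_loop_drop free) [k2 Hk2 L2].
wlog le_k : q1 q2 k1 k2 Hk1 Hk2 L1 L2 / k1 <= k2.
  move=> hyp; case: (leqP k1 k2) => [|/ltnW]; first exact: hyp.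
  by move=> le_k; symmetry; apply: hyp le_k.
have split_w : drop k1 w = take (k2 - k1) (drop k1 w) ++ drop k2 w.
  by rewrite -{2}(subnK le_k) -drop_drop cat_take_drop.
move: L1; rewrite split_w => /lang_cat [p Hp Lp].
have Ep : p = q2.
  by have [// | /eqP neq] := eqVneq p q2; case: (disjoint _ _ neq _ (conj Lp L2)).
move: Hp; rewrite Ep; case/orP: Hk2 => [/eqP k2_0 | Hq2].
- by rewrite k2_0 sub0n take0 => /set1P.
- exact: entry_free_hat_delta free Hq2.
Qed.

Lemma entry_free_simple_loop :
  simple M -> entry_free (starts M) (delta M) -> simple (nfa_loop M).
Proof.
case=> acc [nonempty disjoint] free; split; [|split].
- by move=> q; apply: accessible_loop (acc q).
- by move=> q; have [w Hw] := nonempty q; exists w; apply: lang_loop.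
- by move=> q1 q2 neq w [L1 L2]; apply/neq/(loop_lang_disjoint disjoint free L1 L2).
Qed.

End Loop.

Lemma entry_free_iff (Q Sigma : finType) (M : nfa Q Sigma) :
  entry_free (starts M) (delta M) <->
  ~ (exists (s : Sigma) (qa q : Q),
       [/\ qa \in starts M, q <> qa & qa \in delta M q s]).
Proof.
split=> [free [s [qa [q [Hqa neq Hd]]]] | no_edge q s qa Hqa Hd].
  exact/neq/(free q s qa).
have [// | /eqP neq] := eqVneq q qa.
by case: no_edge; exists s, qa, q.
Qed.

Theorem mainTheorem2 (Q Sigma : finType) (M : nfa Q Sigma) :
  simple M ->
  (simple (nfa_loop M) <->
   ~ (exists (s : Sigma) (qa q : Q),
        [/\ qa \in starts M, q <> qa & qa \in delta M q s])).
Proof.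
move=> simM; split.
- by move/simple_loop_entry_free/entry_free_iff.
- by move/entry_free_iff; apply: entry_free_simple_loop.
Qed.
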